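(* Let $\mathcal G=(G,f,h)$ be a network dynamical system of size $N$ with maximum out-degree $\Delta(G)$, satisfying Assumptions 1 and 2. Let $P$ be an integer with $2\Delta(G)+1<P<N$, and for each $q\in[N]$ let $\phi_q\in\mathbb R^{P\times N}$ be a full-spark matrix. For each $q\in[N]$ let $x^q(1)$ be the state at time $1$ of the trajectory started from a $q$-pinching initial condition, and let $y^q(1)=\phi_q x^q(1)$. Then for every $q\in[N]$ the optimization problem $$\min_{\tilde x\in\mathbb R^N}\|\tilde x\|_0\quad\text{subject to}\quad \phi_q\tilde x=y^q(1)$$ has a unique solution $x^q_*(1)$, and $x^q_*(1)=x^q(1)$. Moreover, $\operatorname{supp}(x^q(1))\setminus\{q\}=L_1(q)$ for every $q\in[N]$; consequently the adjacency matrix $A$ is uniquely determined by $\{(\phi_q,y^q(1))\}_{q=1}^N$ via $A_{ij}=1$ iff $i\neq j$ and $i\in\operatorname{supp}(x^j_*(1))$.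
   Context: Let $G$ be a directed graph on vertex set $[N]=\{1,\dots,N\}$ without self-loops, with adjacency matrix $A\in\{0,1\}^{N\times N}$, where $A_{ij}=1$ if and only if $i$ receives an edge (input) from $j$; in particular $A_{ii}=0$. The out-degree of $q\in[N]$ is $d_q=\#\{i: A_{iq}=1\}$, the maximum out-degree is $\Delta(G)=\max_{q}d_q$, and the first-level set of $q$ is $L_1(q)=\{i\in[N]: A_{iq}=1\}$. The network dynamical system $\mathcal G=(G,f,h)$ is the discrete-time system $x_i(t+1)=f_i(x_i(t))+\sum_{j=1}^N A_{ij}h_{ij}(x_i(t),x_j(t))$ for $i\in[N]$, $t=0,1,2,\dots$, where $f_i:\mathbb R\to\mathbb R$ and $h_{ij}:\mathbb R\times\mathbb R\to\mathbb R$; the state vector is $x(t)=(x_1(t),\dots,x_N(t))^T$. Assumption 1: $f_i(0)=0$ for all $i\in[N]$. Assumption 2: there is $\delta>0$ such that for all $i,j\in[N]$, $h_{ij}(0,0)=0$ and $h_{ij}(0,v)\neq 0$ for every $v$ with $0<|v|<\delta$. For $q\in[N]$, a $q$-pinching initial condition is $x^q(0)$ with $x^q_i(0)=\epsilon_q\delta_{iq}$ (Kronecker delta), where $0<|\epsilon_q|<\delta$; $x^q(t)$ denotes the resulting trajectory. For $x\in\mathbb R^N$, $\operatorname{supp}(x)=\{i: x_i\neq0\}$ and $\|x\|_0=\#\operatorname{supp}(x)$. The spark of $\phi\in\mathbb R^{P\times N}$ ($P<N$) is $\min\{\|x\|_0: \phi x=0,\ x\neq 0\}$; $\phi$ is full-spark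 if its spark equals $P+1$. *)

From HB Require Import structures.
From mathcomp Require Import all_boot all_order all_algebra.
From mathcomp Require Import reals.
Set Implicit Arguments. Unset Strict Implicit. Unset Printing Implicit Defensive.
Import Order.TTheory GRing.Theory Num.Theory.
Local Open Scope ring_scope.

(* Graph on [N] = 'I_N: A i j = true iff i receives an edge from j. *)

Definition out_degree (N : nat) (A : 'I_N -> 'I_N -> bool) (q : 'I_N) : nat :=
  #|[set i | A i q]|.

Definition max_out_degree (N : nat) (A : 'I_N -> 'I_N -> bool) : nat :=
  (\max_(q < N) out_degree A q)%N.

Definition L1 (N : nat) (A : 'I_N -> 'I_N -> bool) (q : 'I_N) : {set 'I_N} :=
  [set i | A i q].

Definition nds_step (R : realType) (N : nat) (A : 'I_N -> 'I_N -> bool)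
  (f : 'I_N -> R -> R) (h : 'I_N -> 'I_N -> R -> R -> R) (x : 'cV[R]_N) : 'cV[R]_N :=
  \col_i (f i (x i 0) + \sum_(j < N) (A i j)%:R * h i j (x i 0) (x j 0)).

Definition pinch (R : realType) (N : nat) (q : 'I_N) (eps : R) : 'cV[R]_N :=
  \col_i (eps * (i == q)%:R).

Definition supp (R : realType) (N : nat) (x : 'cV[R]_N) : {set 'I_N} :=
  [set i | x i 0 != 0].
Definition l0 (R : realType) (N : nat) (x : 'cV[R]_N) : nat := #|supp x|.

(* spark(phi) = P + 1, i.e. min { ||x||_0 : phi x = 0, x <> 0 } = P + 1 *)
Definition full_spark (R : realType) (P N : nat) (phi : 'M[R]_(P, N)) : Prop :=
  (forall x : 'cV[R]_N, phi *m x = 0 -> x != 0 -> (P.+1 <= l0 x)%N) /\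
  (exists x : 'cV[R]_N, [/\ phi *m x = 0, x != 0 & l0 x = P.+1]).

Definition l0_minimizer (R : realType) (P N : nat) (phi : 'M[R]_(P, N))
  (y : 'cV[R]_P) (x : 'cV[R]_N) : Prop :=
  phi *m x = y /\ forall x' : 'cV[R]_N, phi *m x' = y -> (l0 x <= l0 x')%N.

From HB Require Import structures.
From mathcomp Require Import all_boot all_order all_algebra.
From mathcomp Require Import reals.
Import Order.TTheory GRing.Theory Num.Theory.
Local Open Scope ring_scope.

(* After one step from a q-pinching state, node i <> q only sees the term
   A_iq h_iq(0, eps), which is nonzero exactly when i is an out-neighbour of q;
   so x^q(1) has at most Delta(G) + 1 nonzero entries.  Since 2(Delta(G) + 1)
   <= P, any two vectors that are this sparse and have the same image under a
   full-spark phi_q coincide (their difference would be a kernel vector with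
   at most P nonzero entries), so x^q(1) is the unique l0 minimizer. *)

Lemma leq_l0B {R : realType} {N : nat} (x y : 'cV[R]_N) :
  (l0 (x - y) <= l0 x + l0 y)%N.
Proof.
rewrite /l0; apply: leq_trans (leq_card_setU _ _).
apply/subset_leq_card/subsetP => i; rewrite !inE !mxE.
have [->|//] := eqVneq (x i 0) 0; rewrite sub0r oppr_eq0 => ->.
by rewrite orbT.
Qed.

Lemma full_spark_inj (R : realType) (P N : nat) (phi : 'M[R]_(P, N))
    (x z : 'cV[R]_N) :
  full_spark phi -> phi *m x = phi *m z -> (l0 x + l0 z <= P)%N -> x = z.
Proof.
move=> [kerP _] eq_phi sparse; apply/eqP; rewrite -subr_eq0.
apply/negPn/negP => nz_xz.
have := kerP (x - z); rewrite mulmxBr eq_phi subrr => /(_ erefl nz_xz).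
by move=> /leq_trans/(_ (leq_trans (leq_l0B x z) sparse)); rewrite ltnn.
Qed.

Lemma full_spark_l0_recovery (R : realType) (P N : nat) (phi : 'M[R]_(P, N))
    (x : 'cV[R]_N) :
  full_spark phi -> ((l0 x).*2 <= P)%N ->
  l0_minimizer phi (phi *m x) x /\
  forall x', l0_minimizer phi (phi *m x) x' -> x' = x.
Proof.
move=> spark sparse.
have eq_x x' : phi *m x' = phi *m x -> (l0 x' <= l0 x)%N -> x' = x.
  move=> eq_phi le_x'x; apply: full_spark_inj spark eq_phi _.
  by apply: leq_trans sparse; rewrite -addnn leq_add2r.
split; last by move=> x' [eq_phi /(_ x erefl)]; apply: eq_x.
split=> // x' eq_phi; rewrite leqNgt; apply/negP => lt_x'x.
by move: (lt_x'x); rewrite (eq_x x' eq_phi (ltnW lt_x'x)) ltnn.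
Qed.

Lemma nds_step_pinch_entry (R : realType) (N : nat) (A : 'I_N -> 'I_N -> bool)
    (f : 'I_N -> R -> R) (h : 'I_N -> 'I_N -> R -> R -> R) (q i : 'I_N) (eps : R) :
  (forall i, f i 0 = 0) -> (forall i j, h i j 0 0 = 0) -> i != q ->
  nds_step A f h (pinch q eps) i 0 = (A i q)%:R * h i q 0 eps.
Proof.
move=> f0 h00 neq_iq; rewrite !mxE (negbTE neq_iq) mulr0 f0 add0r.
rewrite (bigD1 q) //= big1 ?addr0 => [|j neq_jq]; first by rewrite !mxE eqxx mulr1.
by rewrite !mxE (negbTE neq_jq) mulr0 h00 mulr0.
Qed.

Lemma supp_step_pinch (R : realType) (N : nat) (A : 'I_N -> 'I_N -> bool)
    (f : 'I_N -> R -> R) (h : 'I_N -> 'I_N -> R -> R -> R) (q : 'I_N) (eps : R) :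
  (forall i, A i i = false) -> (forall i, f i 0 = 0) ->
  (forall i j, h i j 0 0 = 0) -> (forall i, h i q 0 eps != 0) ->
  supp (nds_step A f h (pinch q eps)) :\ q = L1 A q.
Proof.
move=> Airr f0 h00 hq; apply/setP => i; rewrite !inE.
have [->|neq_iq] /= := eqVneq i q; first by rewrite Airr.
rewrite nds_step_pinch_entry //.
by case: (A i q); rewrite ?mul1r ?hq ?mul0r ?eqxx.
Qed.

Lemma l0_le_suppD1 {R : realType} {N : nat} (x : 'cV[R]_N) (q : 'I_N) :
  (l0 x <= #|supp x :\ q|.+1)%N.
Proof. by rewrite /l0 (cardsD1 q) -add1n leq_add2r leq_b1. Qed.

Lemma card_L1_le_max_out_degree (N : nat) (A : 'I_N -> 'I_N -> bool) (q : 'I_N) :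
  (#|L1 A q| <= max_out_degree A)%N.
Proof. exact: (@leq_bigmax _ (fun q => out_degree A q) q). Qed.

Theorem mainTheorem1 (R : realType) (N : nat) (A : 'I_N -> 'I_N -> bool)
  (f : 'I_N -> R -> R) (h : 'I_N -> 'I_N -> R -> R -> R) (delta : R)
  (P : nat) (phi : 'I_N -> 'M[R]_(P, N)) (eps : 'I_N -> R) :
  (forall i, A i i = false) ->
  (forall i, f i 0 = 0) ->
  0 < delta ->
  (forall i j, h i j 0 0 = 0 /\ (forall v, 0 < `|v| < delta -> h i j 0 v != 0)) ->
  ((max_out_degree A).*2.+1 < P < N)%N ->
  (forall q, full_spark (phi q)) ->
  (forall q, 0 < `|eps q| < delta) ->
  let x1 := fun q => nds_step A f h (pinch q (eps q)) in
  let y1 := fun q => phi q *m x1 q in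
  [/\ (forall q, l0_minimizer (phi q) (y1 q) (x1 q) /\
                 forall x', l0_minimizer (phi q) (y1 q) x' -> x' = x1 q),
      (forall q, supp (x1 q) :\ q = L1 A q) &
      (forall xs : 'I_N -> 'cV[R]_N,
         (forall q, l0_minimizer (phi q) (y1 q) (xs q)) ->
         forall i j, A i j = (i != j) && (i \in supp (xs j)))].
Proof.
move=> Airr f0 _ hH /andP[lt_DP _] spark epsH x1 y1.
have supp1 q : supp (x1 q) :\ q = L1 A q.
  apply: supp_step_pinch => // [i j|i]; first by case: (hH i j).
  by case: (hH i q) => _; apply.
have recover q : l0_minimizer (phi q) (y1 q) (x1 q) /\
    forall x', l0_minimizer (phi q) (y1 q) x' -> x' = x1 q.
  apply: full_spark_l0_recovery (spark q) _; apply: leq_trans lt_DP.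
  rewrite -doubleS leq_double; apply: (leq_trans (l0_le_suppD1 _ q)).
  by rewrite supp1 ltnS card_L1_le_max_out_degree.
split=> // xs xs_min i j; rewrite ((recover j).2 _ (xs_min j)).
have [->|neq_ij] /= := eqVneq i j; first exact: Airr.
by move/setP/(_ i): (supp1 j); rewrite !inE neq_ij.
Qed.
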